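(* Let $p$ be a prime with $p \equiv 1 \pmod 6$. Then for every integer $e \ge 1$ there is a unique (up to isomorphism) 6-valent first-kind Frobenius circulant with cyclic kernel of order $p^e$, namely $\Gamma(p^e) = TL_{p^e}(a_e, a_e - 1, 1)$, where $a_e \equiv (p^e+1)(v+1)/2 \pmod{p^e}$ with $v$ a solution of $x^2 \equiv -3 \pmod{p^e}$.
   Context: For $n\ge 7$, $\mathbb{Z}_n$ is the integers modulo $n$ with residue classes $[m]$, and $\mathbb{Z}_n^*$ its unit group acting on $\mathbb{Z}_n$ by multiplication. $\mathrm{Cay}(K,S)$ is the Cayley graph (vertices $K$, $x\sim y$ iff $xy^{-1}\in S$). For integers $a,b,c$ with $a,b,c,n-a,n-b,n-c$ pairwise distinct modulo $n$, $TL_n(a,b,c)=\mathrm{Cay}(\mathbb{Z}_n,\{\pm[a],\pm[b],\pm[c]\})$. A Frobenius group is a transitive, non-regular permutation group in which only the identity fixes two points; a finite one is $K\rtimes H$ with regular normal kernel $K$ and point stabiliser $H$ acting on $K$ by conjugation. A first-kind $K\rtimes H$-Frobenius graph is $\mathrm{Cay}(K,s^H)$ with $\langle s^H\rangle=K$ and $|H|$ even or $s$ an involution. A 6-valent first-kind Frobenius circulant with cyclic kernel of order $n$ is a 6-valent $TL_n(a,b,c)$ that is a first-kind $\mathbb{Z}_n\rtimes H$-Frobenius graph for some $H\le\mathbb{Z}_n^*$ such that $\mathbb{Z}_n\rtimes H$ (acting by $[x]^{([y],[m])}=[(x+y)m]$) is a Frobenius group with kernel $\mathbb{Z}_n$.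 *)

From HB Require Import structures.
From mathcomp Require Import all_boot all_order all_algebra all_fingroup.
Set Implicit Arguments. Unset Strict Implicit. Unset Printing Implicit Defensive.
Import GRing.Theory.
Local Open Scope ring_scope.

(* Elements of Z_n are taken in 'Z_n (we always have n >= 7 > 1). *)

Definition affine n (y : 'Z_n) (m : {unit 'Z_n}) (x : 'Z_n) : 'Z_n :=
  (x + y) * val m.

(* Z_n x| H (acting as above) is a Frobenius group (transitive, non-regular,
   only the identity fixes two points) with Frobenius kernel Z_n, i.e. the
   identity together with the fixed-point-free elements are exactly the
   translations ([y],[1]).  The action is faithful, so group elements are
   identified with pairs (y, m). *)
Definition frobenius_affine n (H : {set {unit 'Z_n}}) : Prop :=
  [/\ (forall x x' : 'Z_n, exists y, exists2 m, m \in H & affine y m x = x'),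
      (exists y, exists2 m, m \in H &
          ~ (y = 0 /\ m = 1%g) /\ exists x, affine y m x = x),
      (forall y m, m \in H -> forall x1 x2, x1 != x2 ->
          affine y m x1 = x1 -> affine y m x2 = x2 -> y = 0 /\ m = 1%g)
    & (forall y m, m \in H ->
          ((forall x, affine y m x <> x) \/ (y = 0 /\ m = 1%g)) <-> m = 1%g)].

Definition cay n (S : {set 'Z_n}) : rel 'Z_n := fun x y => (x - y) \in S.

Definition sorbit n (H : {set {unit 'Z_n}}) (s : 'Z_n) : {set 'Z_n} :=
  [set s * val h | h in H].

Definition TLset n (a b c : 'Z_n) : {set 'Z_n} := [set a; -a; b; -b; c; -c].
Definition TL_ok n (a b c : 'Z_n) : bool := uniq [:: a; b; c; -a; -b; -c].

Definition first_kind n (H : {set {unit 'Z_n}}) (s : 'Z_n) : Prop :=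
  <<sorbit H s>>%g = [set: 'Z_n] /\
  (~~ odd #|H| \/ (s != 0 /\ s + s = 0)).

Definition FC6 n (a b c : 'Z_n) : Prop :=
  TL_ok a b c /\
  exists (H : {group {unit 'Z_n}}) (s : 'Z_n),
    [/\ frobenius_affine H, first_kind H s & cay (TLset a b c) =2 cay (sorbit H s)].

Definition graph_iso (T : finType) (r1 r2 : rel T) : Prop :=
  exists f : T -> T, bijective f /\ forall x y, r1 x y = r2 (f x) (f y).

From HB Require Import structures.
From mathcomp Require Import all_boot all_order all_algebra all_fingroup all_solvable.
From mathcomp Require Import zify ring.
Set Implicit Arguments.
Unset Strict Implicit.
Unset Printing Implicit Defensive.

Import GRing.Theory.
Local Open Scope ring_scope.

(* Z_(p^e) is a local ring whose unit group has order p^(e-1)(p-1), divisible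
   by 6.  Hence -3 is a square v^2 and a = (1 + v)/2 satisfies a^2 = a - 1, so
   its powers are the six elements 1, a, a - 1, -1, -a, 1 - a, and a^k - 1 is a
   unit for 0 < k < 6: the group <a> is a Frobenius complement of order 6 with
   orbit TL(a, a - 1, 1) through 1.  A point stabiliser H of an affine
   Frobenius group is characterised by m - 1 being a unit for every m <> 1 in
   H.  For a 6-valent first-kind Frobenius circulant, the connection set s^H
   generates Z_(p^e), so s is a unit and |H| = 6; then H contains -1 (its
   involution) and a primitive cube root of unity, which in a local ring with
   3 invertible is a^2 or a^4.  So a lies in H, the connection set is s times
   that of TL(a, a - 1, 1), and multiplication by s^-1 is an isomorphism. *)

Lemma val_unit_eq1 {R : finUnitRingType} (u : {unit R}) : (val u == 1) = (u == 1%g).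
Proof. by rewrite -FinRing.val_unit1 (inj_eq val_inj). Qed.

Lemma val_unit_expg_order {R : finUnitRingType} (u : {unit R}) : val u ^+ #[u]%g = 1.
Proof. by rewrite -FinRing.val_unitX expg_order FinRing.val_unit1. Qed.

Section ZpCirculant.
Variable n : nat.
Local Notation Zn := 'Z_n.

Lemma Zp_gen1 (A : {set Zn}) : 1 \in A -> <<A>>%g = setT.
Proof.
move=> A1; apply/eqP; rewrite eqEsubset subsetT /= Zp_cycle cycle_subG.
exact: mem_gen.
Qed.

Lemma cay_inj (S T : {set Zn}) : cay S =2 cay T -> S = T.
Proof. by move=> eqST; apply/setP => x; have := eqST x 0; rewrite /cay subr0. Qed.

Lemma card_TLset (a b c : Zn) : TL_ok a b c -> #|TLset a b c| = 6%N.
Proof.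
move=> /card_uniqP uniq6; rewrite -[6%N]uniq6 -cardsE; apply: eq_card => x; rewrite !inE.
by case: (x == a); case: (x == -a); case: (x == b); case: (x == -b);
   case: (x == c); case: (x == -c).
Qed.

Lemma card_sorbit (H : {set {unit Zn}}) (s : Zn) :
  s \is a GRing.unit -> #|sorbit H s| = #|H|.
Proof. by move=> Us; apply: card_imset => h1 h2 /(mulrI Us) /val_inj. Qed.

(* The multiples of s form an additive subgroup containing s^H. *)
Lemma sorbit_gen_unit (H : {set {unit Zn}}) (s : Zn) :
  <<sorbit H s>>%g = setT -> s \is a GRing.unit.
Proof.
move=> genT.
have sZ_group : group_set [set s * x | x : Zn].
  apply/group_setP; split; first by apply/imsetP; exists 0; rewrite ?mulr0.
  move=> _ _ /imsetP[x _ ->] /imsetP[y _ ->].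
  by apply/imsetP; exists (x + y); rewrite ?mulrDr.
have sorbit_sub : <<sorbit H s>>%g \subset Group sZ_group.
  rewrite gen_subG; apply/subsetP => _ /imsetP[h _ ->].
  by apply/imsetP; exists (val h).
have /imsetP[x _ sx1] : (1 : Zn) \in Group sZ_group.
  by apply: (subsetP sorbit_sub); rewrite genT inE.
by apply/unitrPr; exists x; rewrite -sx1.
Qed.

Lemma cay_scale_iso (S : {set Zn}) (s : Zn) : s \is a GRing.unit ->
  graph_iso (cay [set s * u | u in S]) (cay S).
Proof.
move=> Us; exists (fun x => s^-1 * x); split.
  by exists (fun x => s * x) => x; rewrite ?mulKr ?mulVKr.
move=> x y; rewrite /cay -mulrBr; apply/imsetP/idP => [[u Su ->]|Sxy].
  by rewrite mulKr.
by exists (s^-1 * (x - y)); rewrite ?mulVKr.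
Qed.

(* For y = - m^-1 the map x |-> (x + y) m fixes x iff x (m - 1) = 1, so it is
   fixed-point-free, hence in the kernel, unless m - 1 is a unit. *)
Lemma frobenius_affine_sub1_unit (H : {set {unit Zn}}) (m : {unit Zn}) :
  frobenius_affine H -> m \in H -> m != 1%g -> (val m - 1) \is a GRing.unit.
Proof.
case=> _ _ _ fpf_kernel Hm; apply: contraR => nUm1; apply/eqP.
apply/(fpf_kernel (- (val m)^-1) m Hm); left => x /eqP.
rewrite /affine -subr_eq0 => /eqP fix_x; apply: (negP nUm1); apply/unitrPr.
exists x; have Um : val m \is a GRing.unit := valP m.
rewrite -[RHS](mulVr Um); apply/eqP; rewrite -subr_eq0 -fix_x; apply/eqP; ring.
Qed.

Lemma frobenius_affine_of (H : {group {unit Zn}}) (m0 : {unit Zn}) :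
  m0 \in H -> m0 != 1%g ->
  {in H, forall m : {unit Zn}, m != 1%g -> (val m - 1) \is a GRing.unit} ->
  frobenius_affine H.
Proof.
move=> Hm0 m0_neq1 Hsub1; split.
- move=> x x'; exists (x' - x); exists 1%g => //.
  by rewrite /affine FinRing.val_unit1 mulr1 addrC subrK.
- exists 0; exists m0 => //; split.
    by case=> _ m0_1; rewrite m0_1 eqxx in m0_neq1.
  by exists 0; rewrite /affine addr0 mul0r.
- move=> y m Hm x1 x2 x12.
  have [-> | m_neq1] := eqVneq m 1%g; rewrite /affine => fix1 fix2.
    move: fix1; rewrite FinRing.val_unit1 mulr1 => /eqP.
    by rewrite -subr_eq0 addrC addKr => /eqP.
  have : (x1 - x2) * (val m - 1) = 0 * (val m - 1).
    have -> : (x1 - x2) * (val m - 1) = ((x1 + y) * val m - x1) - ((x2 + y) * val m - x2)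
      by ring.
    by rewrite fix1 fix2 !subrr mul0r.
  move/(mulIr (Hsub1 m Hm m_neq1))/eqP; rewrite subr_eq0 => x1_eq_x2.
  by rewrite x1_eq_x2 in x12.
- move=> y m Hm; split=> [[fpf | [] //] | ->].
    apply/eqP; apply: contraT => m_neq1; have Um1 := Hsub1 m Hm m_neq1.
    pose x := - y * val m / (val m - 1).
    have x_mul : x * (val m - 1) = - y * val m by rewrite mulrVK.
    case: (fpf x); apply/eqP; rewrite /affine -subr_eq0.
    have -> : (x + y) * val m - x = x * (val m - 1) + y * val m by ring.
    by rewrite x_mul mulNr addNr.
  have [-> | y_neq0] := eqVneq y 0; [by right | left] => x.
  rewrite /affine FinRing.val_unit1 mulr1 => /eqP.
  by rewrite -subr_eq0 addrC addKr (negbTE y_neq0).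
Qed.

Lemma frobenius_affine_involution (H : {set {unit Zn}}) (z : {unit Zn}) :
  frobenius_affine H -> z \in H -> #[z]%g = 2%N -> val z = -1.
Proof.
move=> frobH Hz z_order.
have z_neq1 : z != 1%g by rewrite -order_eq1 z_order.
have z_sq := val_unit_expg_order z; rewrite z_order in z_sq.
have : (val z - 1) * (val z + 1) = (val z - 1) * 0.
  have -> : (val z - 1) * (val z + 1) = val z ^+ 2 - 1 by ring.
  by rewrite z_sq subrr mulr0.
by move/(mulrI (frobenius_affine_sub1_unit frobH Hz z_neq1))/eqP; rewrite addr_eq0 => /eqP.
Qed.

End ZpCirculant.

Section PrimePowerModulus.
Variables p e : nat.
Hypotheses (p_prime : prime p) (p_mod6 : (p %% 6 = 1)%N) (e_gt0 : (0 < e)%N).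
Local Notation Z := 'Z_(p ^ e).

Lemma pe_gt1 : (1 < p ^ e)%N.
Proof. by rewrite -{1}(expn0 p) ltn_exp2l // prime_gt1. Qed.

Lemma Zpe_natr_unit k : ((k%:R : Z) \is a GRing.unit) = ~~ (p %| k)%N.
Proof. by rewrite unitZpE ?pe_gt1 // coprime_pexpl // prime_coprime. Qed.

Lemma Zpe_natr_unit_small k : (0 < k < 7)%N -> (k%:R : Z) \is a GRing.unit.
Proof.
case/andP=> k_gt0 k_lt7; rewrite Zpe_natr_unit gtnNdvd //.
by have := prime_gt1 p_prime; lia.
Qed.

Lemma Zpe_nonunitD (x y : Z) :
  x \isn't a GRing.unit -> y \isn't a GRing.unit -> x + y \isn't a GRing.unit.
Proof.
by rewrite -[x]natr_Zp -[y]natr_Zp -natrD !Zpe_natr_unit !negbK; apply: dvdn_add.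
Qed.

Lemma Zpe_mul_eq0 (x y c : Z) :
  x * y = 0 -> y - c * x \is a GRing.unit -> x = 0 \/ y = 0.
Proof.
move=> xy0 Ucomb.
have [Ux | nUx] := boolP (x \is a GRing.unit).
  by right; apply: (mulrI Ux); rewrite mulr0.
have [Uy | nUy] := boolP (y \is a GRing.unit).
  by left; apply: (mulIr Uy); rewrite mul0r.
have : y - c * x \isn't a GRing.unit.
  by rewrite Zpe_nonunitD // unitrN unitrM (negbTE nUx) andbF.
by rewrite Ucomb.
Qed.

Lemma Zpe_mul2_half : 2 * ((p ^ e).+1./2)%:R = 1 :> Z.
Proof.
have p_odd : odd p.
  by have := modn2 p; rewrite -(modn_dvdm _ (isT : (2 %| 6)%N)) p_mod6; case: odd.
have pe_half : (((p ^ e).+1)./2 * 2 = (p ^ e).+1)%N.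
  by rewrite -[RHS]odd_double_half /= oddX p_odd orbT muln2.
by rewrite -natrM mulnC pe_half mulrSr pchar_Zp ?pe_gt1 // add0r.
Qed.

Lemma Zpe_cube_root1 (r : Z) : r ^+ 3 = 1 -> r != 1 -> r ^+ 2 + r + 1 = 0.
Proof.
move=> r3 r_neq1.
have prod0 : (r - 1) * (r ^+ 2 + r + 1) = 0.
  have -> : (r - 1) * (r ^+ 2 + r + 1) = r ^+ 3 - 1 by ring.
  by rewrite r3 subrr.
have comb_unit : r ^+ 2 + r + 1 - (r + 2) * (r - 1) \is a GRing.unit.
  have -> : r ^+ 2 + r + 1 - (r + 2) * (r - 1) = 3 by ring.
  exact: Zpe_natr_unit_small.
by have [/eqP | //] := Zpe_mul_eq0 prod0 comb_unit; rewrite subr_eq0 (negbTE r_neq1).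
Qed.

Lemma Zpe_sqrt_neg3 : exists v : Z, v * v = - 3.
Proof.
have dvd3_units : (3 %| #|[set: {unit Z}]%G|)%N.
  rewrite /= (card_units_Zp (ltnW pe_gt1)) totient_pfactor //.
  apply: dvdn_mulr; apply/dvdnP; exists (2 * (p %/ 6))%N.
  have := prime_gt1 p_prime; lia.
have [t _ t_order] := Cauchy (isT : prime 3) dvd3_units.
have t_cube := val_unit_expg_order t; rewrite t_order in t_cube.
have t_neq1 : val t != 1 by rewrite val_unit_eq1 -order_eq1 t_order.
exists (2 * val t + 1).
have -> : (2 * val t + 1) * (2 * val t + 1) = 4 * (val t ^+ 2 + val t + 1) - 3 by ring.
by rewrite Zpe_cube_root1 // mulr0 sub0r.
Qed.

Lemma Zpe_sixth_root (v a : Z) : v * v = - 3 -> 2 * a = v + 1 -> a ^+ 2 = a - 1.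
Proof.
move=> v_sq a2_eq; apply/eqP; rewrite -subr_eq0.
have U4 : (4 : Z) \is a GRing.unit by exact: Zpe_natr_unit_small.
rewrite -(mulrI_eq0 _ (mulrI U4)).
have -> : 4 * (a ^+ 2 - (a - 1)) = (2 * a) ^+ 2 - 2 * (2 * a) + 4 by ring.
rewrite a2_eq.
have -> : (v + 1) ^+ 2 - 2 * (v + 1) + 4 = v * v + 3 by ring.
by rewrite v_sq addNr.
Qed.

Section SixthRoot.
Variable a : Z.
Hypothesis a_sq : a ^+ 2 = a - 1.

Lemma a_cube : a ^+ 3 = -1.
Proof. by rewrite exprS a_sq mulrBr mulr1 -expr2 a_sq addrAC subrr add0r. Qed.

Lemma a_expr4 : a ^+ 4 = - a.
Proof. by rewrite exprS a_cube mulrN1. Qed.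

Lemma a_expr5 : a ^+ 5 = - (a - 1).
Proof. by rewrite (exprD _ 2 3) a_sq a_cube mulrN1. Qed.

Lemma a_expr6 : a ^+ 6 = 1.
Proof. by rewrite (exprD _ 3 3) a_cube mulrNN mulr1. Qed.

Lemma a_unit : a \is a GRing.unit.
Proof. by apply/unitrPr; exists (- a ^+ 2); rewrite mulrN -exprS a_cube opprK. Qed.

Lemma a_sub2_mul_add1 : (a - 2) * (a + 1) = - 3.
Proof.
have -> : (a - 2) * (a + 1) = a ^+ 2 - a - 2 by ring.
by rewrite a_sq; ring.
Qed.

Lemma a_expr_sub1_unit k : (0 < k < 6)%N -> a ^+ k - 1 \is a GRing.unit.
Proof.
have /andP[U2 U1] : (a - 2 \is a GRing.unit) && (a + 1 \is a GRing.unit).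
  by rewrite -unitrM a_sub2_mul_add1 unitrN Zpe_natr_unit_small.
case: k => [|[|[|[|[|[|k]]]]]] //= _.
- by rewrite expr1 -a_sq unitrX // a_unit.
- by rewrite a_sq (_ : _ - 1 = a - 2) //; ring.
- by rewrite a_cube (_ : -1 - 1 = - 2) ?unitrN ?Zpe_natr_unit_small //; ring.
- by rewrite a_expr4 -opprD unitrN.
- by rewrite a_expr5 opprB addrC addKr unitrN a_unit.
Qed.

Lemma a_expr_inj i j : (i < 6)%N -> (j < 6)%N -> a ^+ i = a ^+ j -> i = j.
Proof.
wlog le_ij : i j / (i <= j)%N.
  move=> wlog_ij i6 j6 eq_ij; have [le_ij | /ltnW le_ji] := leqP i j.
    exact: wlog_ij.
  exact/esym/wlog_ij.
move=> _ j6 eq_ij; apply/eqP; rewrite eqn_leq le_ij /=; apply: contraT; rewrite -ltnNge.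
move=> lt_ij; have /a_expr_sub1_unit : (0 < j - i < 6)%N by apply/andP; split; lia.
suff -> : a ^+ (j - i) - 1 = 0 by rewrite unitr0.
apply: (mulrI (unitrX i a_unit)); rewrite mulr0 mulrBr mulr1 -exprD subnKC //.
by rewrite eq_ij subrr.
Qed.

Lemma a_powers :
  [seq a ^+ k | k <- iota 0 6] = [:: 1; a; a - 1; -1; -a; -(a - 1)].
Proof. by rewrite /= expr0 expr1 a_sq a_cube a_expr4 a_expr5. Qed.

Lemma TL_ok_a : TL_ok a (a - 1) 1.
Proof.
rewrite /TL_ok.
have -> : [:: a; a - 1; 1; -a; -(a - 1); -1] = [seq a ^+ k | k <- [:: 1; 2; 0; 4; 5; 3]%N].
  by rewrite /= expr0 expr1 a_sq a_cube a_expr4 a_expr5.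
have lt6 : {in [:: 1; 2; 0; 4; 5; 3]%N, forall k, (k < 6)%N} by apply/allP.
by rewrite map_inj_in_uniq // => i j /lt6 i6 /lt6 j6; apply: a_expr_inj.
Qed.

Lemma mem_TLset_a x :
  (x \in TLset a (a - 1) 1) = (x \in [seq a ^+ k | k <- iota 0 6]).
Proof.
rewrite a_powers !inE.
by case: (x == a); case: (x == -a); case: (x == a - 1); case: (x == -(a - 1));
   case: (x == 1); case: (x == -1).
Qed.

Definition unit_a : {unit Z} := FinRing.unit _ a_unit.

Lemma mem_cycle_unit_a (h : {unit Z}) :
  h \in <[unit_a]>%g -> exists2 k, (k < 6)%N & val h = a ^+ k.
Proof.
case/cycleP => i ->; exists (i %% 6)%N; first by rewrite ltn_pmod.
by rewrite FinRing.val_unitX {1}(divn_eq i 6) exprD mulnC exprM a_expr6 expr1n mul1r.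
Qed.

Lemma TLset_a_sorbit : TLset a (a - 1) 1 = sorbit <[unit_a]>%g 1.
Proof.
apply/setP => x; rewrite mem_TLset_a; apply/mapP/imsetP.
  case=> k _ ->; exists (unit_a ^+ k)%g; first exact: mem_cycle.
  by rewrite mul1r FinRing.val_unitX.
case=> h /mem_cycle_unit_a [k k6 ->] ->; exists k; last by rewrite mul1r.
by rewrite mem_iota.
Qed.

Lemma FC6_a : FC6 a (a - 1) 1.
Proof.
split; first exact: TL_ok_a.
have a_neq1 : unit_a != 1%g.
  rewrite -val_unit_eq1; apply: contraTneq (a_expr_sub1_unit (isT : (0 < 1 < 6)%N)) => /= ->.
  by rewrite expr1 subrr unitr0.
have card_cycle : #|<[unit_a]>%g| = 6%N.
  by rewrite -(card_sorbit _ (unitr1 Z)) -TLset_a_sorbit card_TLset // TL_ok_a.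
exists <[unit_a]>%G, 1; split; last by rewrite -TLset_a_sorbit.
- apply: (frobenius_affine_of (cycle_id unit_a) a_neq1).
  move=> m /mem_cycle_unit_a [[|k] k6 mk]; first by rewrite -val_unit_eq1 mk eqxx.
  by rewrite mk => _; apply: a_expr_sub1_unit.
- split; last by left; rewrite card_cycle.
  by apply: Zp_gen1; rewrite -TLset_a_sorbit !inE eqxx !orbT.
Qed.

(* The two candidate factors differ by 2a - 1, whose square is -3. *)
Lemma cube_root1_a (r : Z) : r ^+ 2 + r + 1 = 0 -> r = a ^+ 2 \/ r = a ^+ 4.
Proof.
move=> r_root.
have prod0 : (r - a ^+ 2) * (r - a ^+ 4) = 0.
  rewrite a_sq a_expr4.
  have -> : (r - (a - 1)) * (r - - a) = r ^+ 2 + r + 1 - (a ^+ 2 - (a - 1)) by ring.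
  by rewrite r_root a_sq !subrr.
have diff_unit : r - a ^+ 4 - 1 * (r - a ^+ 2) \is a GRing.unit.
  have -> : r - a ^+ 4 - 1 * (r - a ^+ 2) = 2 * a - 1 by rewrite a_sq a_expr4; ring.
  have diff_sq : (2 * a - 1) ^+ 2 = - 3.
    have -> : (2 * a - 1) ^+ 2 = 4 * a ^+ 2 - 4 * a + 1 by ring.
    by rewrite a_sq; ring.
  by rewrite -(unitrX_pos _ (isT : (0 < 2)%N)) diff_sq unitrN Zpe_natr_unit_small.
by case: (Zpe_mul_eq0 prod0 diff_unit) => /eqP; rewrite subr_eq0 => /eqP; [left | right].
Qed.

Lemma frobenius_complement_mem_a (H : {group {unit Z}}) :
  frobenius_affine H -> (6 %| #|H|)%N -> exists2 g, g \in H & val g = a.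
Proof.
move=> frobH dvd6H.
have [t Ht t_order] := Cauchy (isT : prime 3) (dvdn_trans (isT : (3 %| 6)%N) dvd6H).
have [z Hz z_order] := Cauchy (isT : prime 2) (dvdn_trans (isT : (2 %| 6)%N) dvd6H).
have z_neg1 := frobenius_affine_involution frobH Hz z_order.
have t_cube := val_unit_expg_order t; rewrite t_order in t_cube.
have t_neq1 : val t != 1 by rewrite val_unit_eq1 -order_eq1 t_order.
have [t_a2 | t_a4] := cube_root1_a (Zpe_cube_root1 t_cube t_neq1).
- exists (z * t ^+ 2)%g; first by rewrite groupM ?groupX.
  by rewrite FinRing.val_unitM FinRing.val_unitX z_neg1 t_a2 -exprM a_expr4 mulN1r opprK.
- exists (z * t)%g; first by rewrite groupM.
  by rewrite FinRing.val_unitM z_neg1 t_a4 a_expr4 mulN1r opprK.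
Qed.

Lemma FC6_TLset_scale (b c d : Z) : FC6 b c d ->
  exists2 s : Z, s \is a GRing.unit & TLset b c d = [set s * u | u in TLset a (a - 1) 1].
Proof.
case=> TL_ok_bcd [H [s [frobH [genT _] /cay_inj TLset_sorbit]]].
have Us := sorbit_gen_unit genT.
have card_H : #|H| = 6%N.
  by rewrite -(card_sorbit H Us) -TLset_sorbit card_TLset.
have [g Hg ga] : exists2 g, g \in H & val g = a.
  by apply: frobenius_complement_mem_a; rewrite ?card_H.
exists s => //; apply/eqP; rewrite eq_sym eqEcard card_imset; last exact: mulrI.
rewrite card_TLset // card_TLset ?TL_ok_a // leqnn andbT.
apply/subsetP => x /imsetP[u + ->]; rewrite mem_TLset_a => /mapP[k _ ->].
rewrite TLset_sorbit; apply/imsetP; exists (g ^+ k)%g; first exact: groupX.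
by rewrite FinRing.val_unitX ga.
Qed.

End SixthRoot.

End PrimePowerModulus.

Theorem corollary2p3 (p e : nat) :
  prime p -> (p %% 6 = 1)%N -> (0 < e)%N ->
  (exists v : 'Z_(p ^ e), v * v = - 3%:R) /\
  forall v : 'Z_(p ^ e), v * v = - 3%:R ->
    let a : 'Z_(p ^ e) := ((p ^ e).+1./2)%:R * (v + 1) in
    FC6 a (a - 1) 1 /\
    forall b c d : 'Z_(p ^ e), FC6 b c d ->
      graph_iso (cay (TLset b c d)) (cay (TLset a (a - 1) 1)).
Proof.
move=> p_prime p_mod6 e_gt0; split; first exact: Zpe_sqrt_neg3.
move=> v v_sq a.
have a_sq : a ^+ 2 = a - 1.
  by apply: Zpe_sixth_root v_sq _; rewrite // mulrA Zpe_mul2_half // mul1r.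
split; first exact: FC6_a.
by move=> b c d /(FC6_TLset_scale p_prime p_mod6 e_gt0 a_sq) [s Us ->]; apply: cay_scale_iso.
Qed.
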